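(* Let $T$ be a rooted tree with root $r$ and nonnegative node weights $p(\cdot)$, and let $H(T,r)$ be the weighted heavy path of $T$ containing $r$. Then a node $u\in H(T,r)$ minimizing $|2p(T_u)-p(T)|$ over $u\in H(T,r)$ is a middle point of $T$, i.e., it also minimizes $|2p(T_u)-p(T)|$ over all nodes $u$ of $T$.
   Context: Edges of $T$ are directed from parent to child. For a node $u$, $T_u$ is the subtree of $T$ rooted at $u$ (consisting of $u$ and all its descendants), and for a set $S$ of nodes $p(S)=\sum_{v\in S}p(v)$; $p(T)$ is the total weight of $T$. For each internal node $u$, choose a child $v$ of $u$ with the largest subtree weight $p(T_v)$ (ties broken arbitrarily); the edge $(u,v)$ is called heavy and the other outgoing edges of $u$ are light. A weighted heavy path is a maximal path formed by concatenating heavy edges; $H(T,r)$ is the one containing the root, i.e., the path obtained starting from $r$ and repeatedly following the heavy edge until reaching a leaf. *)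

From HB Require Import structures.
From mathcomp Require Import all_boot all_order all_algebra.
Set Implicit Arguments. Unset Strict Implicit. Unset Printing Implicit Defensive.
Import Order.TTheory GRing.Theory Num.Theory.
Local Open Scope ring_scope.

(* Edges are directed from parent to child. *)
Definition rooted_tree (V : finType) (r : V) (par : V -> V) : Prop :=
  par r = r /\ forall v : V, exists k : nat, iter k par v = r.

Definition child (V : finType) (par : V -> V) : rel V :=
  fun u v => (par v == u) && (v != u).

Definition subtree (V : finType) (par : V -> V) (u : V) : {set V} :=
  [set v | connect (child par) u v].

Definition wt (R : numDomainType) (V : finType) (p : V -> R) (S : {set V}) : R :=
  \sum_(v in S) p v.

Definition internal (V : finType) (par : V -> V) (u : V) : bool :=
  [exists v, child par u v].

Definition heavy_choice (R : numDomainType) (V : finType) (par : V -> V)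
    (p : V -> R) (h : V -> V) : Prop :=
  forall u, internal par u ->
    child par u (h u) /\
    forall c, child par u c -> wt p (subtree par c) <= wt p (subtree par (h u)).

Definition on_heavy_path (V : finType) (par : V -> V) (h : V -> V) (r v : V) : Prop :=
  exists k : nat, iter k h r = v /\ forall j : nat, (j < k)%N -> internal par (iter j h r).

From HB Require Import structures.
From mathcomp Require Import all_boot all_order all_algebra.
From mathcomp Require Import lra.
Set Implicit Arguments. Unset Strict Implicit. Unset Printing Implicit Defensive.
Import Order.TTheory GRing.Theory Num.Theory.
Local Open Scope ring_scope.

(* A node v off the heavy path
   leaves it through a light child c of some path node x, so v lies in T_c
   with p(T_v) <= p(T_c) <= p(T_(h x)); as T_c and T_(h x) are disjoint,
   also p(T_c) + p(T_(h x)) <= p(T).  These inequalities give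
   |2 p(T_(h x)) - p(T)| <= |2 p(T_v) - p(T)|, and h x is on the heavy path. *)

Section Ancestry.

Variables (V : finType) (par : V -> V).

Lemma connect_child_iter_par a b :
  connect (child par) a b -> exists m, iter m par b = a.
Proof.
move/connectP=> [s pth ->]; elim: s a pth => [|x s IH] a /=; first by exists 0%N.
case/andP=> [/andP[/eqP pa _] pth]; have [m Hm] := IH x pth.
by exists m.+1; rewrite iterS Hm pa.
Qed.

Lemma connect_iter_par n a : connect (child par) (iter n par a) a.
Proof.
elim: n => [|n IH]; first exact: connect0.
rewrite iterS; set b := iter n par a.
have [-> // | pb] := eqVneq (par b) b.
by apply: connect_trans IH; apply: connect1; rewrite /child eqxx eq_sym pb.
Qed.

Lemma connect_child_par a b :
  connect (child par) a b -> b != a -> connect (child par) a (par b).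
Proof.
case/connect_child_iter_par=> [[|m] <-]; first by rewrite eqxx.
by rewrite iterSr => _; apply: connect_iter_par.
Qed.

Lemma connect_child_total a b x :
  connect (child par) a x -> connect (child par) b x ->
  connect (child par) a b || connect (child par) b a.
Proof.
case/connect_child_iter_par=> m <-; case/connect_child_iter_par=> n <-.
have [le_mn | /ltnW le_nm] := leqP m n.
  by rewrite -(subnK le_mn) iterD connect_iter_par orbT.
by rewrite -(subnK le_nm) iterD connect_iter_par.
Qed.

Lemma connect_child_decomp u v :
  connect (child par) u v -> v != u ->
  exists2 c, child par u c & connect (child par) c v.
Proof.
move/connectP=> [[|x s] /= pth ->]; first by rewrite eqxx.
by case/andP: pth => cux pth _; exists x => //; apply/connectP; exists s.
Qed.

Lemma mem_subtree_trans a b :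
  b \in subtree par a -> subtree par b \subset subtree par a.
Proof.
by rewrite inE => ab; apply/subsetP => x; rewrite !inE; apply: connect_trans.
Qed.

End Ancestry.

Section RootedTree.

Variables (V : finType) (r : V) (par : V -> V).
Hypothesis tree : rooted_tree r par.

Lemma iter_par_root n : iter n par r = r.
Proof. by case: tree => pr _; elim: n => //= n ->. Qed.

Lemma iter_par_cycle n x : iter n.+1 par x = x -> x = r.
Proof.
move=> cyc; have [k xk] := tree.2 x.
have periodic q : iter (q * n.+1) par x = x.
  by elim: q => [|q IH] //; rewrite mulSn iterD IH cyc.
by rewrite -(periodic k) mulnC mulSn addnC iterD xk iter_par_root.
Qed.

Lemma child_not_ancestor u c : child par u c -> ~~ connect (child par) c u.
Proof.
case/andP=> /eqP pc cu; apply/negP; case/connect_child_iter_par=> n unc.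
have ur : u = r by apply: (@iter_par_cycle n); rewrite iterS unc pc.
by move: cu; rewrite -unc ur iter_par_root eqxx.
Qed.

Lemma subtree_child_proper u c :
  child par u c -> subtree par c \proper subtree par u.
Proof.
move=> uc; rewrite properE mem_subtree_trans ?inE ?connect1 //=.
by apply/subsetPn; exists u; rewrite !inE ?connect0 ?(negbTE (child_not_ancestor uc)).
Qed.

Lemma subtree_children_disjoint u c d :
  child par u c -> child par u d -> c != d ->
  [disjoint subtree par c & subtree par d].
Proof.
have no_nest c' d' : child par u c' -> child par u d' -> d' != c' ->
    ~~ connect (child par) c' d'.
  move=> uc' /andP[/eqP pd _] dc'; apply/negP => /connect_child_par/(_ dc').
  by rewrite pd; apply/negP; apply: child_not_ancestor.
move=> uc ud cd; apply/pred0P => x /=; rewrite !inE.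
apply/negP => /andP[cx dx]; have := connect_child_total cx dx.
by rewrite (negbTE (no_nest _ _ uc ud _)) ?(negbTE (no_nest _ _ ud uc _)) // eq_sym.
Qed.

Lemma mem_subtree_root v : v \in subtree par r.
Proof. by have [k <-] := tree.2 v; rewrite inE connect_iter_par. Qed.

End RootedTree.

Section Weights.

Variables (R : numDomainType) (V : finType) (p : V -> R).
Hypothesis p_ge0 : forall v, 0 <= p v.

Lemma wt_subset (A B : {set V}) : A \subset B -> wt p A <= wt p B.
Proof.
move=> AB; rewrite /wt [leRHS](big_setID A) /= (setIidPr AB) lerDl.
exact: sumr_ge0.
Qed.

Lemma wt_setU_disjoint (A B : {set V}) :
  [disjoint A & B] -> wt p (A :|: B) = wt p A + wt p B.
Proof.
by move=> AB; rewrite /wt -bigU //; apply: eq_bigl => x; rewrite inE.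
Qed.

End Weights.

Lemma imbalance_le (R : realDomainType) (W a b e : R) :
  e <= b -> b <= a -> a + b <= W -> `|2 * a - W| <= `|2 * e - W|.
Proof.
move=> *; rewrite (ler0_norm (x := 2 * e - W)); last by lra.
by rewrite ler_norml; apply/andP; split; lra.
Qed.

Section HeavyPath.

Variables (V : finType) (r : V) (par : V -> V) (h : V -> V).
Hypothesis tree : rooted_tree r par.

Definition light_child (u c : V) : bool := child par u c && (c != h u).

Lemma light_child_internal u c : light_child u c -> internal par u.
Proof. by case/andP=> uc _; apply/existsP; exists c. Qed.

Lemma heavy_path_exit x v : v \in subtree par x ->
  exists k, (forall j, (j < k)%N -> internal par (iter j h x)) /\
    (v = iter k h x \/ exists2 c, light_child (iter k h x) c & v \in subtree par c).
Proof.
move: {2}#|_| (leqnn #|subtree par x|) => n; elim: n x => [|n IH] x.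
  by rewrite leqn0 => /eqP/cards0_eq ->; rewrite inE.
move=> card_x xv; have [-> | vx] := eqVneq v x; first by exists 0%N; split; [|left].
have [c xc cv] : exists2 c, child par x c & v \in subtree par c.
  by move: xv; rewrite inE => /connect_child_decomp/(_ vx)[c]; exists c; rewrite ?inE.
have [ch | ch] := eqVneq c (h x); last first.
  by exists 0%N; split=> //; right; exists c => //; apply/andP.
subst c; have card_h : (#|subtree par (h x)| <= n)%N.
  by rewrite -ltnS (leq_trans _ card_x) // proper_card // (subtree_child_proper tree).
have [k [pre exit]] := IH _ card_h cv.
exists k.+1; split; last by rewrite iterSr.
case=> [|j] jk; first by apply/existsP; exists (h x).
by rewrite iterSr; apply: pre.
Qed.

End HeavyPath.

Lemma heavy_child_imbalance_le (R : realDomainType) (V : finType) (r : V)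
    (par : V -> V) (p : V -> R) (h : V -> V) u c v :
  rooted_tree r par -> (forall v, 0 <= p v) -> heavy_choice par p h ->
  light_child par h u c -> v \in subtree par c ->
  `|2 * wt p (subtree par (h u)) - wt p [set: V]| <=
  `|2 * wt p (subtree par v) - wt p [set: V]|.
Proof.
move=> tree p_ge0 heavy lc cv; have [uh hmax] := heavy _ (light_child_internal lc).
case/andP: lc => uc ch.
apply: (imbalance_le (b := wt p (subtree par c))).
- exact: (wt_subset (R := R) p_ge0 (mem_subtree_trans cv)).
- exact: hmax.
- have disj : [disjoint subtree par (h u) & subtree par c].
    by apply: (subtree_children_disjoint tree uh uc); rewrite eq_sym.
  have := (wt_subset (R := R) p_ge0 (subsetT (subtree par (h u) :|: subtree par c))).
  by rewrite wt_setU_disjoint.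
Qed.

Theorem theorem5 (R : realDomainType) (V : finType) (r : V) (par : V -> V)
    (p : V -> R) (h : V -> V) :
  rooted_tree r par ->
  (forall v, 0 <= p v) ->
  heavy_choice par p h ->
  forall u : V, on_heavy_path par h r u ->
  (forall w : V, on_heavy_path par h r w ->
     `|2 * wt p (subtree par u) - wt p [set: V]| <=
     `|2 * wt p (subtree par w) - wt p [set: V]|) ->
  forall v : V,
     `|2 * wt p (subtree par u) - wt p [set: V]| <=
     `|2 * wt p (subtree par v) - wt p [set: V]|.
Proof.
move=> tree p_ge0 heavy u _ u_min v.
have [k [pre [-> | [c lc cv]]]] := heavy_path_exit h tree (mem_subtree_root tree v).
  by apply: u_min; exists k.
apply: le_trans (u_min (iter k.+1 h r) _) _.
  exists k.+1; split=> // j; rewrite ltnS leq_eqVlt => /predU1P[-> |].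
    exact: light_child_internal lc.
  exact: pre.
by rewrite iterS; apply: heavy_child_imbalance_le tree p_ge0 heavy lc cv.
Qed.
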